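(* Let $\mathcal O^\vee_q$ be the algebra defined in the context, with degrees and subspaces $\mathcal O^\vee_d$ as defined there. For every $d\in\mathbb N$, the subspace $\mathcal O^\vee_d$ is spanned by the products $a_1a_2\cdots a_n$ of essential generators such that both (i) $n\in\mathbb N$ and $\sum_{i=1}^n\deg(a_i)\le d$; and (ii) for $2\le i\le n$, $\deg(a_i)=1$ implies $\deg(a_{i-1})=1$.
   Context: All algebras are associative and unital over a field $\mathbb F$; $q\in\mathbb F$ is nonzero and not a root of unity. For elements $X,Y$ of an algebra, $[X,Y]=XY-YX$ and $[X,Y]_q=qXY-q^{-1}YX$. The algebra $\mathcal O^\vee_q$ is defined by generators (called essential generators) $\mathcal W_0,\mathcal W_1,\{\tilde{\mathcal G}_{k+1}\}_{k\in\mathbb N}$ and relations: $[\mathcal W_0,[\mathcal W_0,[\mathcal W_0,\mathcal W_1]_q]_{q^{-1}}]=(q^2-q^{-2})^2[\mathcal W_1,\mathcal W_0]$; $[\mathcal W_1,[\mathcal W_1,[\mathcal W_1,\mathcal W_0]_q]_{q^{-1}}]=(q^2-q^{-2})^2[\mathcal W_0,\mathcal W_1]$; $[\mathcal W_0,\tilde{\mathcal G}_1]=[\mathcal W_0,[\mathcal W_0,\mathcal W_1]_q]$; $[\tilde{\mathcal G}_1,\mathcal W_1]=[[\mathcal W_0,\mathcal W_1]_q,\mathcal W_1]$; for $k\ge1$: $[\tilde{\mathcal G}_{k+1},\mathcal W_0]=(q^2-q^{-2})^{-2}[\mathcal W_0,[\mathcal W_0,[\mathcal W_1,\tilde{\mathcal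 G}_k]_q]_q]$; for $k\ge1$: $[\mathcal W_1,\tilde{\mathcal G}_{k+1}]=(q^2-q^{-2})^{-2}[[[\tilde{\mathcal G}_k,\mathcal W_0]_q,\mathcal W_1]_q,\mathcal W_1]$; for $k,\ell\in\mathbb N$: $[\tilde{\mathcal G}_{k+1},\tilde{\mathcal G}_{\ell+1}]=0$. Assign degrees $\deg\mathcal W_0=\deg\mathcal W_1=1$ and $\deg\tilde{\mathcal G}_{k+1}=2k+2$ ($k\in\mathbb N$). For $d\in\mathbb N$, $\mathcal O^\vee_d$ is the subspace of $\mathcal O^\vee_q$ spanned by the products $a_1\cdots a_n$ ($n\in\mathbb N$, empty product $=1$) of essential generators with $\sum_i\deg(a_i)\le d$. *)

From HB Require Import structures.
From mathcomp Require Import all_boot all_order all_algebra.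
Set Implicit Arguments. Unset Strict Implicit. Unset Printing Implicit Defensive.
Import Order.TTheory GRing.Theory Num.Theory.
Local Open Scope ring_scope.

(* Essential generators: EW0 = W_0, EW1 = W_1, EG k = \tilde G_{k+1}. *)
Inductive egen := EW0 | EW1 | EG of nat.

Definition edeg (a : egen) : nat :=
  match a with EW0 => 1 | EW1 => 1 | EG k => (2 * k + 2)%N end.

Definition wdeg (w : seq egen) : nat := \sum_(a <- w) edeg a.

Definition adm_rel (a b : egen) : bool := (edeg b == 1%N) ==> (edeg a == 1%N).
Definition admissible (w : seq egen) : bool := sorted adm_rel w.

Section Alg.
Variables (F : fieldType) (A : algType F).

Definition comm (x y : A) : A := x * y - y * x.
Definition qcomm (p : F) (x y : A) : A := p *: (x * y) - p^-1 *: (y * x).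

Variables (w0 w1 : A) (g : nat -> A).

Definition ev (a : egen) : A :=
  match a with EW0 => w0 | EW1 => w1 | EG k => g k end.

Definition wprod (w : seq egen) : A := \prod_(a <- w) ev a.

Definition in_span (P : pred (seq egen)) (x : A) : Prop :=
  exists (ws : seq (seq egen)) (c : seq egen -> F),
    all P ws /\ x = \sum_(w <- ws) c w *: wprod w.

Definition Oq_relations (q : F) : Prop :=
  let c := (q ^+ 2 - q ^- 2) ^+ 2 in
  (comm w0 (qcomm q^-1 w0 (qcomm q w0 w1)) = c *: comm w1 w0) /\
  (comm w1 (qcomm q^-1 w1 (qcomm q w1 w0)) = c *: comm w0 w1) /\
  (comm w0 (g 0%N) = comm w0 (qcomm q w0 w1)) /\
  (comm (g 0%N) w1 = comm (qcomm q w0 w1) w1) /\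
  (forall k : nat, comm (g k.+1) w0 =
      c^-1 *: comm w0 (qcomm q w0 (qcomm q w1 (g k)))) /\
  (forall k : nat, comm w1 (g k.+1) =
      c^-1 *: comm (qcomm q (qcomm q (g k) w0) w1) w1) /\
  (forall k l : nat, comm (g k) (g l) = 0).

End Alg.

(** Admissible words are those in which every W-letter precedes every
    G-letter.  Left multiplication by a W-letter keeps a word admissible, and
    so does left multiplication by [G_{k+1}] on an admissible word that starts
    with a G-letter.  When [G_{k+1}] meets a W-letter we swap them,
    [G W u = [G, W] u + W (G u)], and the relations express [[G_{k+1}, W_i]]
    through nested (q-)commutators of [W_0], [W_1], [G_k] of total degree
    [2k + 5].  Hence, by induction on [k], left multiplication by [G_{k+1}]
    raises the admissible filtration by at most [2k + 2], and every word of
    degree [n] lies in the span of admissible words of degree at most [n].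
    Only the four relations involving both [G] and [W] are needed. *)

From HB Require Import structures.
From mathcomp Require Import all_boot all_order all_algebra.
From mathcomp Require Import zify.
Set Implicit Arguments. Unset Strict Implicit. Unset Printing Implicit Defensive.
Import GRing.Theory.
Local Open Scope ring_scope.

Definition egen_comparable : comparable egen.
Proof. by rewrite /comparable /decidable; decide equality; apply: eq_comparable. Defined.
HB.instance Definition _ := hasDecEq.Build egen (compareP egen_comparable).

Lemma wdeg_nil : wdeg [::] = 0%N.
Proof. by rewrite /wdeg big_nil. Qed.

Lemma wdeg_cons a w : wdeg (a :: w) = (edeg a + wdeg w)%N.
Proof. by rewrite /wdeg big_cons. Qed.

Lemma admissible_consW a u : edeg a = 1%N -> admissible u -> admissible (a :: u).
Proof.
by move=> ea; case: u => //= b u ->; rewrite andbT /adm_rel ea eqxx implybT.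
Qed.

Lemma admissible_consG a b u :
  edeg b != 1%N -> admissible (b :: u) -> admissible (a :: b :: u).
Proof. by rewrite /admissible /= /adm_rel => /negbTE ->. Qed.

Section AdmissibleSpan.
Variables (F : fieldType) (A : algType F) (w0 w1 : A) (g : nat -> A).

Local Notation ev := (ev w0 w1 g).
Local Notation wprod := (wprod w0 w1 g).

Lemma wprod_nil : wprod [::] = 1.
Proof. by rewrite /wprod big_nil. Qed.

Lemma wprod_cons a w : wprod (a :: w) = ev a * wprod w.
Proof. by rewrite /wprod big_cons. Qed.

Lemma comm_antisym (x y : A) : comm y x = - comm x y.
Proof. by rewrite /comm opprB. Qed.

Lemma mulr_commE (x y z : A) : x * (y * z) = comm x y * z + y * (x * z).
Proof. by rewrite /comm mulrBl !mulrA subrK. Qed.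

Inductive wspan (P : pred (seq egen)) : A -> Prop :=
| wspan0 : wspan P 0
| wspan_cons c w x : P w -> wspan P x -> wspan P (c *: wprod w + x).

Lemma wspan_wprod (P : pred (seq egen)) w : P w -> wspan P (wprod w).
Proof.
move=> Pw; rewrite -[wprod w]addr0 -[wprod w]scale1r.
by apply: wspan_cons => //; apply: wspan0.
Qed.

Lemma wspanD (P : pred (seq egen)) x y : wspan P x -> wspan P y -> wspan P (x + y).
Proof.
elim=> [|c w z Pw _ IH] Py; first by rewrite add0r.
by rewrite -addrA; apply: wspan_cons => //; apply: IH.
Qed.

Lemma wspanZ (P : pred (seq egen)) a x : wspan P x -> wspan P (a *: x).
Proof.
elim=> [|c w z Pw _ IH]; first by rewrite scaler0; apply: wspan0.
by rewrite scalerDr scalerA; apply: wspan_cons.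
Qed.

Lemma wspanN (P : pred (seq egen)) x : wspan P x -> wspan P (- x).
Proof. by rewrite -scaleN1r; apply: wspanZ. Qed.

Lemma wspan_mull (P Q : pred (seq egen)) y x :
  (forall w, P w -> wspan Q (y * wprod w)) -> wspan P x -> wspan Q (y * x).
Proof.
move=> hP; elim=> [|c w z Pw _ IH]; first by rewrite mulr0; apply: wspan0.
by rewrite mulrDr -scalerAr; apply: wspanD => //; apply/wspanZ/hP.
Qed.

Lemma wspan_trans (P Q : pred (seq egen)) x :
  (forall w, P w -> wspan Q (wprod w)) -> wspan P x -> wspan Q x.
Proof.
move=> hP /(wspan_mull (y := 1)); rewrite mul1r; apply=> w /hP.
by rewrite mul1r.
Qed.

Lemma wspan_sum (P : pred (seq egen)) ws (c : seq egen -> F) :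
  all P ws -> wspan P (\sum_(w <- ws) c w *: wprod w).
Proof.
elim: ws => [|w ws IH] /=; first by rewrite big_nil => _; apply: wspan0.
by case/andP=> Pw /IH; rewrite big_cons; apply: wspan_cons.
Qed.

(* The coefficients of [in_span] are a function of the word, so repeated
   words must be merged: hence the [uniq] representation. *)
Lemma wspan_uniq_sum (P : pred (seq egen)) x :
  wspan P x -> exists ws (c : seq egen -> F),
  [/\ uniq ws, all P ws & x = \sum_(w <- ws) c w *: wprod w].
Proof.
elim=> [|c w y Pw _ [ws [c' [Uws Pws ->]]]].
  by exists [::], (fun=> 0); rewrite big_nil.
have [wws | wNws] := boolP (w \in ws).
  exists ws, (fun v => if v == w then c + c' v else c' v); split=> //.
  rewrite (bigD1_seq w) //= (bigD1_seq w wws Uws) /= eqxx addrA scalerDl.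
  by congr (_ + _); apply: eq_bigr => v /negbTE ->.
exists (w :: ws), (fun v => if v == w then c else c' v).
split=> /=; [by rewrite wNws | by rewrite Pw |].
rewrite big_cons eqxx !big_seq; congr (_ + _); apply: eq_bigr => v vws.
by case: eqP => // vw; rewrite -vw vws in wNws.
Qed.

Lemma in_spanP (P : pred (seq egen)) x : in_span w0 w1 g P x <-> wspan P x.
Proof.
split; first by case=> ws [c [Pws ->]]; apply: wspan_sum.
by case/wspan_uniq_sum=> ws [c [_ Pws ->]]; exists ws, c.
Qed.

Definition adm_span (n : nat) : A -> Prop :=
  wspan (fun w => (wdeg w <= n)%N && admissible w).

Lemma adm_span_leq m n x : (m <= n)%N -> adm_span m x -> adm_span n x.
Proof.
move=> mn; apply: wspan_trans => w /andP[wm aw]; apply: wspan_wprod.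
by rewrite aw (leq_trans wm mn).
Qed.

Lemma adm_span_wprod u : admissible u -> adm_span (wdeg u) (wprod u).
Proof. by move=> au; apply: wspan_wprod; rewrite leqnn. Qed.

Definition adm_lmul (m : nat) (y : A) : Prop :=
  forall n x, adm_span n x -> adm_span (m + n) (y * x).

Lemma adm_lmul_words m y :
  (forall u, admissible u -> adm_span (m + wdeg u) (y * wprod u)) -> adm_lmul m y.
Proof.
move=> hy n x; apply: wspan_mull => u /andP[un au].
by apply: adm_span_leq (hy u au); rewrite leq_add2l.
Qed.

Lemma adm_lmul_leq m n y : (m <= n)%N -> adm_lmul m y -> adm_lmul n y.
Proof. by move=> mn hy k x /hy; apply: adm_span_leq; rewrite leq_add2r. Qed.

Lemma adm_lmulD m x y : adm_lmul m x -> adm_lmul m y -> adm_lmul m (x + y).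
Proof.
by move=> hx hy n z hz; rewrite mulrDl; apply: wspanD; [exact: hx | exact: hy].
Qed.

Lemma adm_lmulZ m a y : adm_lmul m y -> adm_lmul m (a *: y).
Proof. by move=> hy n z /hy; rewrite -scalerAl; apply: wspanZ. Qed.

Lemma adm_lmulN m y : adm_lmul m y -> adm_lmul m (- y).
Proof. by move=> hy n z /hy; rewrite mulNr; apply: wspanN. Qed.

Lemma adm_lmulB m x y : adm_lmul m x -> adm_lmul m y -> adm_lmul m (x - y).
Proof. by move=> hx /adm_lmulN; apply: adm_lmulD. Qed.

Lemma adm_lmulM m n x y : adm_lmul m x -> adm_lmul n y -> adm_lmul (m + n) (x * y).
Proof. by move=> hx hy k z /hy /hx; rewrite mulrA addnA. Qed.

Lemma adm_lmul_comm m n x y :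
  adm_lmul m x -> adm_lmul n y -> adm_lmul (m + n) (comm x y).
Proof.
move=> hx hy; apply: adm_lmulB; first exact: adm_lmulM.
by rewrite addnC; apply: adm_lmulM.
Qed.

Lemma adm_lmul_qcomm p m n x y :
  adm_lmul m x -> adm_lmul n y -> adm_lmul (m + n) (qcomm p x y).
Proof.
move=> hx hy; apply: adm_lmulB; apply: adm_lmulZ; first exact: adm_lmulM.
by rewrite addnC; apply: adm_lmulM.
Qed.

Lemma adm_lmulW a : edeg a = 1%N -> adm_lmul 1 (ev a).
Proof.
move=> ea; apply: adm_lmul_words => u au; rewrite -wprod_cons -ea -wdeg_cons.
exact/adm_span_wprod/admissible_consW.
Qed.

Lemma adm_lmul_w0 : adm_lmul 1 w0. Proof. exact: (@adm_lmulW EW0). Qed.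
Lemma adm_lmul_w1 : adm_lmul 1 w1. Proof. exact: (@adm_lmulW EW1). Qed.

Lemma adm_lmul_g k :
  adm_lmul (2 * k + 3) (comm (g k) w0) -> adm_lmul (2 * k + 3) (comm (g k) w1) ->
  adm_lmul (2 * k + 2) (g k).
Proof.
move=> h0 h1; have hW a : edeg a = 1%N -> adm_lmul (2 * k + 3) (comm (g k) (ev a)).
  by case: a => // j /eqP; rewrite /= addn2.
have hG u : admissible (EG k :: u) -> adm_span (2 * k + 2 + wdeg u) (g k * wprod u).
  rewrite -(wprod_cons (EG k)) -[(2 * k + 2)%N]/(edeg (EG k)) -wdeg_cons.
  exact: adm_span_wprod.
apply: adm_lmul_words; elim=> [|a u IH] au; first exact: hG.
have [/eqP ea | na] := boolP (edeg a == 1%N); last exact/hG/admissible_consG.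
have au' := path_sorted au.
rewrite wprod_cons mulr_commE wdeg_cons ea; apply: wspanD.
  by apply: adm_span_leq (hW a ea _ _ (adm_span_wprod au')); lia.
by apply: adm_span_leq (adm_lmulW ea (IH au')); lia.
Qed.

Section Relations.
Variables (q : F) (hrel : Oq_relations w0 w1 g q).

Lemma adm_lmul_G k : adm_lmul (2 * k + 2) (g k).
Proof.
case: hrel => [_ [_ [r3 [r4 [r5 [r6 _]]]]]].
have hw0 := adm_lmul_w0; have hw1 := adm_lmul_w1.
elim: k => [|k IHk]; apply: adm_lmul_g.
- rewrite comm_antisym r3; apply/adm_lmulN.
  by apply: adm_lmul_leq (adm_lmul_comm hw0 (adm_lmul_qcomm q hw0 hw1)).
- rewrite r4.
  by apply: adm_lmul_leq (adm_lmul_comm (adm_lmul_qcomm q hw0 hw1) hw1).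
- rewrite r5; apply/adm_lmulZ.
  apply: adm_lmul_leq (adm_lmul_comm hw0 (adm_lmul_qcomm q hw0
                         (adm_lmul_qcomm q hw1 IHk))); lia.
- rewrite comm_antisym r6; apply/adm_lmulN/adm_lmulZ.
  apply: adm_lmul_leq (adm_lmul_comm (adm_lmul_qcomm q
                         (adm_lmul_qcomm q IHk hw0) hw1) hw1); lia.
Qed.

Lemma adm_lmul_ev a : adm_lmul (edeg a) (ev a).
Proof.
by case: a => [||k]; [exact: adm_lmul_w0 | exact: adm_lmul_w1 | exact: adm_lmul_G]. Qed.

Lemma wprod_adm_span w : adm_span (wdeg w) (wprod w).
Proof.
have hw: adm_lmul (wdeg w) (wprod w).
  elim: w => [|a w IH]; first by rewrite wprod_nil wdeg_nil => n x; rewrite mul1r.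
  by rewrite wprod_cons wdeg_cons; apply: adm_lmulM (adm_lmul_ev a) IH.
rewrite -[wprod w]mulr1 -[wdeg w]addn0; apply: hw.
by rewrite -wprod_nil -wdeg_nil; apply: adm_span_wprod.
Qed.

End Relations.
End AdmissibleSpan.

Theorem proposition9p4 (F : fieldType) (q : F)
  (hq0 : q != 0) (hq : forall n : nat, (0 < n)%N -> q ^+ n != 1)
  (A : algType F) (w0 w1 : A) (g : nat -> A)
  (hrel : Oq_relations w0 w1 g q) (d : nat) (x : A) :
  in_span w0 w1 g (fun w => (wdeg w <= d)%N) x <->
  in_span w0 w1 g (fun w => (wdeg w <= d)%N && admissible w) x.
Proof.
split=> [/in_spanP x_span | [ws [c [Pws ->]]]]; last first.
  by exists ws, c; split=> //; apply: sub_all Pws => w /andP[].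
apply/in_spanP; apply: wspan_trans x_span => w wd.
exact: adm_span_leq wd (wprod_adm_span hrel w).
Qed.
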